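(* Let $X$ be a topological space, $G$ a group and $\varphi\colon G\times X\to X$ a continuous action that is cocompactly expansive. Let $H\le G$ be a syndetic subgroup. Then the restricted action $\varphi|_{H\times X}\colon H\times X\to X$ is continuous and cocompactly expansive.
   Context: Write $g\cdot x=\varphi(g,x)$. For a family $\mathcal U$ of subsets of $X$ and $A\subseteq X$, write $A\prec\mathcal U$ if $A\subseteq U$ for some $U\in\mathcal U$. The action is cocompactly expansive if there exist a finite open cover $\mathcal U$ of $X$ and a compact set $K\subseteq X$ such that (1) $G\cdot K=X$, and (2) whenever $x,y\in X$ satisfy $\{g\cdot x,g\cdot y\}\prec\mathcal U\cup\{X\setminus K\}$ for every $g\in G$, then $x=y$. (Equivalently, for all $x\neq y$ there is $g$ with $\{g\cdot x,g\cdot y\}\cap K\neq\emptyset$ and $\{g\cdot x,g\cdot y\}$ not contained in any member of $\mathcal U$.) A subgroup $H\le G$ is syndetic if there is a finite set $F\subseteq G$ with $G=FH$. *)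

From HB Require Import structures.
From mathcomp Require Import all_boot monoid.
From mathcomp Require Import all_classical topology.
Set Implicit Arguments. Unset Strict Implicit. Unset Printing Implicit Defensive.
Local Open Scope classical_set_scope.
Local Open Scope group_scope.

Definition is_action (G : groupType) (X : Type) (phi : G -> X -> X) : Prop :=
  (forall x, phi 1 x = x) /\ (forall g h x, phi (g * h) x = phi g (phi h x)).

Definition is_subgroup (G : groupType) (H : set G) : Prop :=
  H 1 /\ (forall g h, H g -> H h -> H (g * h)) /\ (forall g, H g -> H g^-1).

Definition syndetic (G : groupType) (H : set G) : Prop :=
  exists F : seq G, forall g : G, exists f h, f \in F /\ H h /\ g = f * h.

(* Continuity of the action of the elements of S (G carries the discrete
   topology, so continuity of S x X -> X is continuity of each phi g). *)
Definition continuous_action_on (G : groupType) (X : topologicalType)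
  (S : set G) (phi : G -> X -> X) : Prop :=
  forall g, S g -> continuous (phi g).

(* A ≺ 𝒰 ∪ {X \ K}, where the finite family 𝒰 is indexed by 'I_n. *)
Definition prec_cover (X : Type) (n : nat) (U : 'I_n -> set X) (K : set X)
  (A : set X) : Prop :=
  (exists i : 'I_n, A `<=` U i) \/ A `<=` ~` K.

Definition cocompactly_expansive_on (G : groupType) (X : topologicalType)
  (S : set G) (phi : G -> X -> X) : Prop :=
  exists (n : nat) (U : 'I_n -> set X) (K : set X),
    (forall i, open (U i)) /\
    (forall x : X, exists i, U i x) /\
    compact K /\
    (forall x : X, exists g k, S g /\ K k /\ x = phi g k) /\
    (forall x y : X,
        (forall g, S g -> prec_cover U K [set phi g x; phi g y]) -> x = y).

From HB Require Import structures.
From mathcomp Require Import all_boot monoid.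
From mathcomp Require Import all_classical topology.
Local Open Scope classical_set_scope.
Local Open Scope group_scope.
Set Implicit Arguments. Unset Strict Implicit. Unset Printing Implicit Defensive.

(* Write G = F H with F finite. For H take the compact set
   K' = U_(f in F) f^-1 K, which meets every H-orbit since H is closed under
   inverses, and the finite open cover by the sets  /\_(f in F) f^-1 U_(s f),
   one for each choice s : F -> U. If g = f h and {h x, h y} is subordinate to
   this cover or avoids K', then {g x, g y} is subordinate to U or avoids K;
   so expansivity of the H-action follows from that of the G-action. *)

Lemma open_bigcapT (T : topologicalType) (I : finType) (A : I -> set T) :
  (forall i, open (A i)) -> open (\bigcap_i A i).
Proof.
move=> oA; have -> : \bigcap_i A i = \big[setI/setT]_(i <- enum I) A i.
  rewrite -bigcap_seq; congr bigcap.
  by apply/seteqP; split => i //= _; rewrite mem_enum.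
by elim/big_ind: _ => //; [exact: openT | exact: openI].
Qed.

Section SyndeticRestriction.
Variables (X : topologicalType) (G : groupType) (phi : G -> X -> X).
Hypothesis phi_action : is_action phi.
Hypothesis phi_cont : forall g, continuous (phi g).
Variable F : seq G.

(* Members are indexed by the choices s : F -> 'I_n, enumerated by [enum_val]. *)
Definition pullback_cover n (U : 'I_n -> set X)
  (j : 'I_#|{: {ffun seq_sub F -> 'I_n}}|) : set X :=
  \bigcap_f phi (ssval f) @^-1` U (enum_val j f).

Definition inv_translates (K : set X) : set X :=
  \bigcup_(f in [set` F]) phi f^-1 @` K.

Lemma open_pullback_cover n (U : 'I_n -> set X) j :
  (forall i, open (U i)) -> open (pullback_cover U j).
Proof.
move=> oU; apply: open_bigcapT => f.
by apply: open_comp => [z _|]; [exact: phi_cont | exact: oU].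
Qed.

Lemma pullback_cover_covers n (U : 'I_n -> set X) :
  (forall x, exists i, U i x) -> forall x, exists j, pullback_cover U j x.
Proof.
move=> cU x.
have [s Hs] := @fin_all_exists (seq_sub F) (fun _ => 'I_n)
  (fun f i => U i (phi (ssval f) x)) (fun f => cU (phi (ssval f) x)).
by exists (enum_rank [ffun f => s f]) => f _; rewrite enum_rankK ffunE.
Qed.

Lemma compact_inv_translates K : compact K -> compact (inv_translates K).
Proof.
move=> cK; rewrite /inv_translates bigcup_seq.
apply: bigsetU_compact => f _; apply: continuous_compact => //.
exact: continuous_subspaceT.
Qed.

Lemma actKV g x : phi g^-1 (phi g x) = x.
Proof. by case: phi_action => act1 actM; rewrite -actM mulVg act1. Qed.

Lemma inv_translates_cocompact (H : set G) K :
  (forall h, H h -> H h^-1) ->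
  (forall g, exists f h, f \in F /\ H h /\ g = f * h) ->
  (forall x, exists g k, setT g /\ K k /\ x = phi g k) ->
  forall x, exists h k, H h /\ inv_translates K k /\ x = phi h k.
Proof.
move=> HV HF cov x; have [g [k [_ [Kk ->]]]] := cov x.
have [f [h [fF [Hh Eg]]]] := HF g^-1.
exists h^-1, (phi f^-1 k); split; first exact: HV.
split; first by exists f => //; exists k.
by case: phi_action => _ actM; rewrite -actM -invgM -Eg invgK.
Qed.

Lemma prec_cover_translate n (U : 'I_n -> set X) K (A : set X) f :
  f \in F ->
  prec_cover (pullback_cover U) (inv_translates K) A ->
  prec_cover U K (phi f @` A).
Proof.
move=> fF [[j Aj]|AK]; [left | right].
  by exists (enum_val j (SeqSub fF)) => _ [z /Aj Vz <-]; exact: Vz.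
move=> _ [z Az <-] Kfz; apply: (AK z Az).
by exists f => //; exists (phi f z) => //; rewrite actKV.
Qed.

Lemma cocompactly_expansive_syndetic (H : set G) :
  (forall h, H h -> H h^-1) ->
  (forall g, exists f h, f \in F /\ H h /\ g = f * h) ->
  cocompactly_expansive_on setT phi -> cocompactly_expansive_on H phi.
Proof.
move=> HV HF [n [U [K [oU [cU [cK [cov exp]]]]]]].
exists _, (pullback_cover U), (inv_translates K).
split; first by move=> j; exact: open_pullback_cover.
split; first exact: pullback_cover_covers.
split; first exact: compact_inv_translates.
split; first exact: inv_translates_cocompact.
move=> x y sep; apply: exp => g _; have [f [h [fF [Hh ->]]]] := HF g.
have [_ actM] := phi_action.
have -> : [set phi (f * h) x; phi (f * h) y] = phi f @` [set phi h x; phi h y].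
  by rewrite image_setU !image_set1 !actM.
exact: prec_cover_translate (sep h Hh).
Qed.

End SyndeticRestriction.

Theorem mainTheorem2 (X : topologicalType) (G : groupType)
  (phi : G -> X -> X) (H : set G) :
  is_action phi ->
  continuous_action_on setT phi ->
  cocompactly_expansive_on setT phi ->
  is_subgroup H ->
  syndetic H ->
  continuous_action_on H phi /\ cocompactly_expansive_on H phi.
Proof.
move=> act cont expG [_ [_ HV]] [F HF].
have phi_cont g : continuous (phi g) by exact: cont.
split; first by move=> g _; exact: phi_cont.
exact: cocompactly_expansive_syndetic.
Qed.
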